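(* Let $\mu\in\mathbb P^\vee$ and let $V$ be a top graded $Y_\mu(\mathfrak g)$-module. Then $V$ is of co-highest $\ell$-weight if and only if its top weight space equals the subspace $\{v\in V: x^+_{i,n}v=0 \text{ for all } (i,n)\in I\times\mathbb N\}$.
   Context: Let $\mathfrak g$ be a finite-dimensional complex simple Lie algebra with Cartan subalgebra $\mathfrak h$, Dynkin nodes $I$, simple roots $\alpha_i$, invariant form $(\,,\,)$ on $\mathfrak h^*$ with $d_i=(\alpha_i,\alpha_i)/2$ coprime positive integers, $c_{ij}=2(\alpha_i,\alpha_j)/(\alpha_i,\alpha_i)$, $d_{ij}=(\alpha_i,\alpha_j)/2$, fundamental coweights $\varpi_i^\vee$ ($\langle\varpi_i^\vee,\alpha_j\rangle=\delta_{ij}$), $\mathbb P^\vee=\bigoplus\mathbb Z\varpi_i^\vee$, $\mathbb Q_-=-\bigoplus\mathbb N\alpha_i$. For $\mu\in\mathbb P^\vee$, $Y_\mu(\mathfrak g)$ is the algebra generated by $x^\pm_{i,n},\xi_{i,p}$ ($i\in I,n\in\mathbb N,p\in\mathbb Z$) with relations $[\xi_{i,p},\xi_{j,q}]=0$, $[x^+_{i,m},x^-_{j,n}]=\delta_{ij}\xi_{i,m+n}$, $[\xi_{i,p+1},x^\pm_{j,n}]-[\xi_{i,p},x^\pm_{j,n+1}]=\pm d_{ij}(\xi_{i,p}x^\pm_{j,n}+x^\pm_{j,n}\xi_{i,p})$, $[x^\pm_{i,m+1},x^\pm_{j,n}]-[x^\pm_{i,m},x^\pm_{j,n+1}]=\pm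 d_{ij}(x^\pm_{i,m}x^\pm_{j,n}+x^\pm_{j,n}x^\pm_{i,m})$, $\mathrm{ad}_{x^\pm_{i,0}}^{1-c_{ij}}(x^\pm_{j,0})=0$ ($i\ne j$), $\xi_{i,-\langle\mu,\alpha_i\rangle-1}=1$, $\xi_{i,p}=0$ for $p<-\langle\mu,\alpha_i\rangle-1$. For a $Y_\mu(\mathfrak g)$-module $V$ and $\beta\in\mathfrak h^*$, the weight space is $V_\beta=\{v: \xi_{i,-\langle\mu,\alpha_i\rangle}v=(\alpha_i,\beta)v\ \forall i\}$; $V$ is a weight module if it is the direct sum of its weight spaces. $V$ is top graded if it is a weight module and there is $\lambda\in\mathfrak h^*$ with all weights in $\lambda+\mathbb Q_-$ and $\dim V_\lambda=1$; $V_\lambda$ is the top weight space. $V$ is of co-highest $\ell$-weight if it is top graded and its top weight space is contained in every nonzero submodule of $V$. *)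

From HB Require Import structures.
From mathcomp Require Import all_boot all_order all_algebra complex reals.
Set Implicit Arguments.
Unset Strict Implicit.
Unset Printing Implicit Defensive.
Import Order.TTheory GRing.Theory Num.Theory.
Local Open Scope ring_scope.

(* Dynkin nodes: a finite type I.  B i j = (alpha_i, alpha_j) (integer  *)
(* valued invariant form on the root lattice), d i = (alpha_i,alpha_i)/2. *)
Definition simple_cartan_datum (I : finType) (d : I -> nat)
    (B : I -> I -> int) : Prop :=
  [/\ (0 < #|I|)%N,
      (forall i, (0 < d i)%N),
      (\big[gcdn/0%N]_(i : I) d i = 1)%N &
      (forall i j, B i j = B j i)] /\ [/\
      (forall i, B i i = (2 * d i)%N%:Z),
      (forall i j, i != j -> B i j <= 0 /\ ((d i)%:Z %| B i j)%Z),
      (forall x : I -> rat, (exists i, x i != 0) ->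
         0 < \sum_(i : I) \sum_(j : I) x i * (B i j)%:~R * x j) &
      (forall S : {set I}, (forall i j, i \in S -> j \notin S -> B i j = 0) ->
         S = set0 \/ S = setT)].

(* Cartan matrix entry c_ij = 2 (a_i,a_j)/(a_i,a_i) = B i j / d i. *)
Definition cartan (I : finType) (d : I -> nat) (B : I -> I -> int) (i j : I)
  : int := (B i j %/ (d i)%:Z)%Z.

Definition dij (C : fieldType) (I : finType) (B : I -> I -> int) (i j : I) : C :=
  (B i j)%:~R / 2.

Section Ymu.
Variables (C : fieldType) (V : lmodType C).

Definition comm (f g : V -> V) : V -> V := fun v => f (g v) - g (f v).
Definition acomm (f g : V -> V) : V -> V := fun v => f (g v) + g (f v).

(* V is a Y_mu(g)-module: xp, xm, xi are the actions of the generators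
   x^+_{i,n}, x^-_{i,n}, xi_{i,p}; m i = <mu, alpha_i>. *)
Definition Ymu_module (I : finType) (d : I -> nat) (B : I -> I -> int)
    (m : I -> int)
    (xp xm : I -> nat -> {linear V -> V}) (xi : I -> int -> {linear V -> V})
  : Prop :=
  [/\ (forall i j p q v, xi i p (xi j q v) = xi j q (xi i p v)) &
      (forall i j a b v, comm (xp i a) (xm j b) v =
                         if i == j then xi i (a + b)%N%:Z v else 0)] /\ [/\
      (forall i j p n v,
         comm (xi i (p + 1)) (xp j n) v - comm (xi i p) (xp j n.+1) v
         = dij C B i j *: acomm (xi i p) (xp j n) v) &
      (forall i j p n v,
         comm (xi i (p + 1)) (xm j n) v - comm (xi i p) (xm j n.+1) v
         = - (dij C B i j *: acomm (xi i p) (xm j n) v))] /\ [/\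
      (forall i j a b v,
         comm (xp i a.+1) (xp j b) v - comm (xp i a) (xp j b.+1) v
         = dij C B i j *: acomm (xp i a) (xp j b) v),
      (forall i j a b v,
         comm (xm i a.+1) (xm j b) v - comm (xm i a) (xm j b.+1) v
         = - (dij C B i j *: acomm (xm i a) (xm j b) v)),
      (forall i j v, i != j ->
         iter `|1 - cartan d B i j|%N (comm (xp i 0%N)) (xp j 0%N) v = 0 /\
         iter `|1 - cartan d B i j|%N (comm (xm i 0%N)) (xm j 0%N) v = 0) &
      (forall i v, xi i (- m i - 1) v = v /\
         forall p, p < - m i - 1 -> xi i p v = 0)].

(* Weights beta in h^* are written in coordinates on the basis of simple
   roots: beta = sum_j b j alpha_j, so (alpha_i, beta) = sum_j B i j b j. *)
Definition pairing (I : finType) (B : I -> I -> int) (i : I) (b : I -> C) : C :=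
  \sum_(j : I) (B i j)%:~R * b j.

Definition wspace (I : finType) (B : I -> I -> int) (m : I -> int)
    (xi : I -> int -> {linear V -> V}) (b : I -> C) (v : V) : Prop :=
  forall i, xi i (- m i) v = pairing B i b *: v.

Definition is_weight (I : finType) (B : I -> I -> int) (m : I -> int)
    (xi : I -> int -> {linear V -> V}) (b : I -> C) : Prop :=
  exists2 v, v != 0 & wspace B m xi b v.

Definition weight_module (I : finType) (B : I -> I -> int) (m : I -> int)
    (xi : I -> int -> {linear V -> V}) : Prop :=
  forall v : V, exists s : seq ((I -> C) * V),
    foldr (fun p P => wspace B m xi p.1 p.2 /\ P) True s /\
    v = \sum_(p <- s) p.2.

Definition top_graded_at (I : finType) (B : I -> I -> int) (m : I -> int)
    (xi : I -> int -> {linear V -> V}) (lam : I -> C) : Prop :=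
  [/\ weight_module B m xi,
      (forall b, is_weight B m xi b ->
         exists n : I -> nat, forall j, b j = lam j - (n j)%:R) &
      (exists2 u, u != 0 /\ wspace B m xi lam u &
        forall v, wspace B m xi lam v -> exists c : C, v = c *: u)].

Definition top_graded (I : finType) (B : I -> I -> int) (m : I -> int)
    (xi : I -> int -> {linear V -> V}) : Prop :=
  exists lam, top_graded_at B m xi lam.

Definition submodule (I : finType)
    (xp xm : I -> nat -> {linear V -> V}) (xi : I -> int -> {linear V -> V})
    (W : V -> Prop) : Prop :=
  [/\ W 0, (forall u v, W u -> W v -> W (u + v)),
      (forall (c : C) v, W v -> W (c *: v)) &
      (forall v, W v -> (forall i n, W (xp i n v) /\ W (xm i n v)) /\
                        (forall i p, W (xi i p v)))].

Definition co_highest_lweight (I : finType) (B : I -> I -> int) (m : I -> int)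
    (xp xm : I -> nat -> {linear V -> V}) (xi : I -> int -> {linear V -> V})
  : Prop :=
  exists lam, top_graded_at B m xi lam /\
    forall W, submodule xp xm xi W -> (exists2 w, w != 0 & W w) ->
      forall v, wspace B m xi lam v -> W v.

End Ymu.

From HB Require Import structures.
From mathcomp Require Import all_boot all_order all_algebra complex reals.
From mathcomp Require Import ring.
From Stdlib Require Import Classical.
Import Order.TTheory GRing.Theory Num.Theory.
Local Open Scope ring_scope.
Set Implicit Arguments. Unset Strict Implicit. Unset Printing Implicit Defensive.

(* Read at p = -<mu,alpha_i> - 1, where xi_{i,p} = 1, the xi/x^{+-} relation says
   that x^+_{j,n} and x^-_{j,n} shift weights by +alpha_j and -alpha_j, while the
   xi's preserve them; in particular x^+ kills the top weight space V_lambda.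
   If every vector killed by all x^+ lies in V_lambda, then in a nonzero submodule
   we apply raising operators to a nonzero vector for as long as the result stays
   nonzero; this stops since all weights lie in lambda + Q_-, and the vector
   reached is killed by all x^+, hence spans V_lambda.
   Conversely, split a vector v killed by all x^+ as v_lambda + v', where v' is a
   sum of weight vectors of weights strictly below lambda. Then v' is killed by
   all x^+ as well, so the span of its translates under the x^- and the xi's is a
   submodule: x^+ commutes past x^- up to a xi, and past the xi's by the xi/x^+
   relation. If v' were nonzero this submodule would contain V_lambda, although
   its weights are strictly below lambda; by positive definiteness of the form
   these weights differ from lambda as functionals, and weight vectors of
   distinct weights are linearly independent. *)

Lemma sum_count_eq (T : finType) (A : Type) (f : A -> T) (s : seq A) :
  (\sum_(j : T) count (fun a => f a == j) s)%N = size s.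
Proof.
elim: s => [|a s IHs] /=; first by rewrite big1.
rewrite big_split /= IHs (bigD1 (f a)) //= eqxx big1 // => j.
by rewrite eq_sym => /negPf->.
Qed.

Section Pairing.
Variables (I : finType) (B : I -> I -> int).

Lemma eq_pairing (C : fieldType) k (b b' : I -> C) :
  (forall j, b j = b' j) -> pairing B k b = pairing B k b'.
Proof. by move=> eq_b; apply: eq_bigr => j _; rewrite eq_b. Qed.

Lemma pairingB (C : fieldType) k (b b' : I -> C) :
  pairing B k (fun j => b j - b' j) = pairing B k b - pairing B k b'.
Proof. by rewrite /pairing -sumrB; apply: eq_bigr => j _; rewrite mulrBr. Qed.

Lemma pairingD (C : fieldType) k (b b' : I -> C) :
  pairing B k (fun j => b j + b' j) = pairing B k b + pairing B k b'.
Proof. by rewrite /pairing -big_split; apply: eq_bigr => j _; rewrite mulrDr. Qed.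

Lemma pairing_delta (C : fieldType) k j :
  pairing B k (fun l => (l == j)%:R : C) = (B k j)%:~R.
Proof.
by rewrite /pairing (bigD1 j) //= eqxx mulr1 big1 ?addr0 // => l /negPf->; rewrite mulr0.
Qed.

Lemma pairing_natr (C : fieldType) k (n : I -> nat) :
  pairing B k (fun j => (n j)%:R : C) = (\sum_j B k j * (n j)%:Z)%:~R.
Proof.
by rewrite rmorph_sum; apply: eq_bigr => j _; rewrite rmorphM /= -pmulrn.
Qed.

Hypothesis B_posdef : forall x : I -> rat, (exists i, x i != 0) ->
  0 < \sum_i \sum_j x i * (B i j)%:~R * x j.

Lemma pairing_natr_eq0 (C : numFieldType) (n : I -> nat) :
  (forall k, pairing B k (fun j => (n j)%:R : C) = 0) -> forall j, n j = 0%N.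
Proof.
move=> pn0 j; apply/eqP; apply: contraT => nj_neq0.
have Bn0 k : \sum_l B k l * (n l)%:Z = 0.
  by apply/eqP; rewrite -(intr_eq0 C) -pairing_natr pn0.
have := B_posdef (x := fun l => (n l)%:R) (ex_intro _ j _).
rewrite pnatr_eq0 big1 ?ltxx => [/(_ nj_neq0)//|i _].
under eq_bigr do rewrite -mulrA.
by rewrite -mulr_sumr -[X in _ * X]/(pairing B i _) pairing_natr Bn0 mulr0.
Qed.
End Pairing.

Section WeightSums.
Variables (C : numFieldType) (V : lmodType C) (I : finType) (B : I -> I -> int)
  (m : I -> int) (xi : I -> int -> {linear V -> V}).
Local Notation wsp := (wspace B m xi).

Lemma eq_wspace (b b' : I -> C) v :
  (forall k, pairing B k b = pairing B k b') -> wsp b v -> wsp b' v.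
Proof. by move=> eq_b v_b k; rewrite v_b eq_b. Qed.

Lemma wspace0 b : wsp b 0.
Proof. by move=> k; rewrite linear0 scaler0. Qed.

Lemma wspaceD b u v : wsp b u -> wsp b v -> wsp b (u + v).
Proof. by move=> u_b v_b k; rewrite linearD /= u_b v_b scalerDr. Qed.

Lemma wspaceZ b (c : C) v : wsp b v -> wsp b (c *: v).
Proof. by move=> v_b k; rewrite linearZ /= v_b !scalerA mulrC. Qed.

Inductive wsum (P : (I -> C) -> Prop) : V -> Prop :=
| wsum0 : wsum P 0
| wsum_cons b u v : P b -> wsp b u -> wsum P v -> wsum P (u + v).

Lemma weight_module_wsum : weight_module B m xi -> forall v, wsum (fun=> True) v.
Proof.
move=> wmod v; have [s [s_w ->]] := wmod v; elim: s s_w => [_|[b u] s IHs /= [u_b s_w]].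
  by rewrite big_nil; apply: wsum0.
by rewrite big_cons; apply: wsum_cons u_b (IHs s_w).
Qed.

Lemma wsumD P u v : wsum P u -> wsum P v -> wsum P (u + v).
Proof.
move=> wu wv; elim: wu => [|b u1 u2 Pb u1_b _ IH]; first by rewrite add0r.
by rewrite -addrA; apply: wsum_cons Pb u1_b IH.
Qed.

Lemma wsum_map P Q (f : V -> V) v :
  f 0 = 0 -> {morph f : x y / x + y} ->
  (forall b x, P b -> wsp b x -> exists2 b', Q b' & wsp b' (f x)) ->
  wsum P v -> wsum Q (f v).
Proof.
move=> f0 fD fP; elim=> [|b u w Pb u_b _ IH]; first by rewrite f0; apply: wsum0.
by have [b' Qb' fu_b'] := fP b u Pb u_b; rewrite fD; apply: wsum_cons Qb' fu_b' IH.
Qed.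

Hypothesis xi_comm : forall i j p q v, xi i p (xi j q v) = xi j q (xi i p v).

Lemma wspace_xi i p b v : wsp b v -> wsp b (xi i p v).
Proof. by move=> v_b k; rewrite xi_comm v_b linearZ. Qed.

(* f is the product of the operators xi_{k,-m_k} - (alpha_k, b) over the summands
   of v, with k chosen so that (alpha_k, b) <> (alpha_k, c). *)
Lemma wsum_annihilator P c v :
  (forall b, P b -> exists k, pairing B k b != pairing B k c) -> wsum P v ->
  exists f : V -> V, [/\ {morph f : x y / x + y},
    forall b x, wsp b x -> wsp b (f x), f v = 0 &
    exists2 s, s != 0 & forall x, wsp c x -> f x = s *: x].
Proof.
move=> Pc; elim=> [|b u w Pb u_b _ [f [fD f_wsp fw0 [s s_neq0 fc]]]].
  by exists id; split=> //; exists 1; rewrite ?oner_eq0 // => x _; rewrite scale1r.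
have [k bc_neq] := Pc b Pb.
pose g x := xi k (- m k) x - pairing B k b *: x.
have gD : {morph g : x y / x + y}.
  by move=> x y; rewrite /g linearD scalerDr opprD addrACA.
have g_wsp b' x : wsp b' x -> wsp b' (g x).
  by move=> x_b'; apply: wspaceD; [exact: wspace_xi | rewrite -scaleNr; exact: wspaceZ].
exists (g \o f); split=> /=.
- by move=> x y /=; rewrite fD gD.
- by move=> b' x /f_wsp/g_wsp.
- by rewrite fD fw0 /g addr0 (f_wsp _ _ u_b k) subrr.
exists (s * (pairing B k c - pairing B k b)) => [|x x_c].
  by rewrite mulf_neq0 // subr_eq0 eq_sym.
by rewrite fc // /g linearZ /= x_c !scalerA -scalerBl; congr (_ *: _); ring.
Qed.

Lemma wsum_wspace_eq0 P c v :
  (forall b, P b -> exists k, pairing B k b != pairing B k c) ->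
  wsum P v -> wsp c v -> v = 0.
Proof.
move=> Pc /(wsum_annihilator Pc) [f [_ _ fv0 [s s_neq0 fc]]] v_c.
by apply: (scalerI s_neq0); rewrite -fc // fv0 scaler0.
Qed.

End WeightSums.

Section RaisingLowering.
Variables (C : numFieldType) (V : lmodType C) (I : finType) (B : I -> I -> int)
  (m : I -> int) (xp xm : I -> nat -> {linear V -> V})
  (xi : I -> int -> {linear V -> V}).
Local Notation wsp := (wspace B m xi).

Hypothesis xi_xp : forall i j p n v,
  comm (xi i (p + 1)) (xp j n) v - comm (xi i p) (xp j n.+1) v
  = dij C B i j *: acomm (xi i p) (xp j n) v.
Hypothesis xi_xm : forall i j p n v,
  comm (xi i (p + 1)) (xm j n) v - comm (xi i p) (xm j n.+1) v
  = - (dij C B i j *: acomm (xi i p) (xm j n) v).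
Hypothesis xi_normalized : forall i v, xi i (- m i - 1) v = v /\
  forall p, p < - m i - 1 -> xi i p v = 0.

Lemma dij_double i j (x : V) : dij C B i j *: (x + x) = (B i j)%:~R *: x.
Proof. by rewrite /dij -mulr2n -scaler_nat scalerA divfK ?pnatr_eq0. Qed.

Lemma wspace_xp j n b v : wsp b v -> wsp (fun l => b l + (l == j)%:R) (xp j n v).
Proof.
move=> v_b k; have := xi_xp k j (- m k - 1) n v.
rewrite /comm /acomm subrK !(proj1 (xi_normalized k _)) subrr subr0 dij_double.
rewrite v_b linearZ /= => /eqP; rewrite subr_eq => /eqP->.
by rewrite pairingD pairing_delta scalerDl addrC.
Qed.

Lemma wspace_xm j n b v : wsp b v -> wsp (fun l => b l - (l == j)%:R) (xm j n v).
Proof.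
move=> v_b k; have := xi_xm k j (- m k - 1) n v.
rewrite /comm /acomm subrK !(proj1 (xi_normalized k _)) subrr subr0 dij_double.
rewrite v_b linearZ /= => /eqP; rewrite subr_eq => /eqP->.
by rewrite pairingB pairing_delta scalerBl addrC.
Qed.

Lemma xp_xi_succ i j p n v :
  xp j n (xi i (p + 1) v) = xi i (p + 1) (xp j n v)
    - comm (xi i p) (xp j n.+1) v - dij C B i j *: acomm (xi i p) (xp j n) v.
Proof. by rewrite -xi_xp [in RHS]/comm [X in _ - X]addrAC subKr. Qed.

Hypothesis xp_xm : forall i j a b v,
  comm (xp i a) (xm j b) v = if i == j then xi i (a + b)%N%:Z v else 0.

Definition singular (v : V) := forall i n, xp i n v = 0.

Inductive lower_span (w : V) : V -> Prop :=
| lower_span_base : lower_span w w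
| lower_span0 : lower_span w 0
| lower_spanD u v : lower_span w u -> lower_span w v -> lower_span w (u + v)
| lower_spanZ (c : C) u : lower_span w u -> lower_span w (c *: u)
| lower_span_xm i n u : lower_span w u -> lower_span w (xm i n u)
| lower_span_xi i p u : lower_span w u -> lower_span w (xi i p u).

Lemma lower_spanB w u v :
  lower_span w u -> lower_span w v -> lower_span w (u - v).
Proof.
by move=> wu wv; apply: lower_spanD wu _; rewrite -scaleN1r; apply: lower_spanZ.
Qed.

Lemma lower_span_xp w u j n :
  singular w -> lower_span w u -> lower_span w (xp j n u).
Proof.
move=> w_sing wu; move: j n.
elim: wu => {u} [||u v _ IHu _ IHv|c u _ IH|i b u wu IH|i p u wu IH] j n.
- by rewrite w_sing; apply: lower_span0.
- by rewrite linear0; apply: lower_span0.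
- by rewrite linearD; apply: lower_spanD; [apply: IHu | apply: IHv].
- by rewrite linearZ; apply/lower_spanZ/IH.
- have := xp_xm j i n b u; rewrite /comm => /eqP; rewrite subr_eq => /eqP->.
  apply: lower_spanD; last exact: lower_span_xm.
  by case: eqP => _; [apply: lower_span_xi | apply: lower_span0].
have xp_xi_from k n' : lower_span w (xp j n' (xi i (- m i - 1 + k%:Z) u)).
  elim: k n' => [|k IHk] n'; first by rewrite addr0 (proj1 (xi_normalized i _)).
  rewrite -addn1 PoszD addrA xp_xi_succ /comm /acomm.
  apply: lower_spanB; first apply: lower_spanB.
  - exact/lower_span_xi/IH.
  - by apply: lower_spanB; [apply/lower_span_xi/IH | apply: IHk].
  - by apply/lower_spanZ/lower_spanD; [apply/lower_span_xi/IH | apply: IHk].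
have [p_lt|p_ge] := ltrP p (- m i - 1).
  by rewrite (proj2 (xi_normalized i _)) // linear0; apply: lower_span0.
have -> : p = - m i - 1 + Posz (absz (p - (- m i - 1))%R).
  by rewrite gez0_abs ?subr_ge0 // subrKC.
exact: xp_xi_from.
Qed.

Lemma lower_span_submodule w : singular w -> submodule xp xm xi (lower_span w).
Proof.
move=> w_sing; split; [exact: lower_span0 | exact: lower_spanD | exact: lower_spanZ|].
move=> u wu; split=> i n; last exact: lower_span_xi.
by split; [exact: lower_span_xp | exact: lower_span_xm].
Qed.

Hypothesis xi_comm : forall i j p q v, xi i p (xi j q v) = xi j q (xi i p v).

Lemma lower_span_wsum P w u :
  (forall b j, P b -> P (fun l => b l - (l == j)%:R)) ->
  wsum B m xi P w -> lower_span w u -> wsum B m xi P u.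
Proof.
move=> P_sub ww; elim=> {u} [||u v _ wu _ wv|c u _ wu|i n u _ wu|i p u _ wu] //.
- exact: wsum0.
- exact: wsumD.
- apply: wsum_map wu => [|x y|b x Pb x_b]; rewrite ?scaler0 ?scalerDr //.
  by exists b => //; apply: wspaceZ.
- apply: wsum_map wu => [|x y|b x Pb x_b]; rewrite ?linear0 ?linearD //.
  by exists (fun l => b l - (l == i)%:R); [apply: P_sub | apply: wspace_xm].
- apply: wsum_map wu => [|x y|b x Pb x_b]; rewrite ?linear0 ?linearD //.
  by exists b => //; apply: wspace_xi.
Qed.

End RaisingLowering.

Section TopWeight.
Variables (C : numFieldType) (V : lmodType C) (I : finType) (B : I -> I -> int)
  (m : I -> int) (xp xm : I -> nat -> {linear V -> V})
  (xi : I -> int -> {linear V -> V}) (lam : I -> C).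
Local Notation wsp := (wspace B m xi).

Hypothesis xi_xp : forall i j p n v,
  comm (xi i (p + 1)) (xp j n) v - comm (xi i p) (xp j n.+1) v
  = dij C B i j *: acomm (xi i p) (xp j n) v.
Hypothesis xi_normalized : forall i v, xi i (- m i - 1) v = v /\
  forall p, p < - m i - 1 -> xi i p v = 0.
Hypothesis weights_below : forall b, is_weight B m xi b ->
  exists n : I -> nat, forall j, b j = lam j - (n j)%:R.

Lemma xp_top_eq0 j n v : wsp lam v -> xp j n v = 0.
Proof.
move=> v_lam; apply/eqP; apply: contraT => xpv_neq0.
have xpv_w : wsp (fun l => lam l + (l == j)%:R) (xp j n v) by apply: wspace_xp.
have [n' /(_ j)] := weights_below (ex_intro2 _ _ (xp j n v) xpv_neq0 xpv_w).
rewrite eqxx => eq_n'.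
suff : (n' j).+1%:R == 0 :> C by rewrite pnatr_eq0.
have -> : (n' j).+1%:R = (lam j + 1) - (lam j - (n' j)%:R) :> C by rewrite -natr1; ring.
by rewrite -eq_n' subrr.
Qed.

Definition strictly_below (b : I -> C) :=
  exists2 n : I -> nat, (exists j, n j != 0%N) & forall j, b j = lam j - (n j)%:R.

Lemma strictly_below_sub_delta b j :
  strictly_below b -> strictly_below (fun l => b l - (l == j)%:R).
Proof.
move=> [n [k nk_neq0] eq_b]; exists (fun l => n l + (l == j))%N.
  by exists k; rewrite addn_eq0 negb_and nk_neq0.
by move=> l; rewrite eq_b natrD opprD addrA.
Qed.

Lemma wsum_top_split v : wsum B m xi (fun=> True) v ->
  exists v1 v2, [/\ wsp lam v1, wsum B m xi strictly_below v2 & v = v1 + v2].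
Proof.
elim=> {v} [|b u v _ u_b _ [v1 [v2 [v1_lam v2_below ->]]]].
  by exists 0, 0; split; [exact: wspace0 | exact: wsum0 | rewrite addr0].
have [->|u_neq0] := eqVneq u 0; first by exists v1, v2; rewrite add0r.
have [n eq_b] := weights_below (ex_intro2 _ _ u u_neq0 u_b).
have [/forallP n0|/forallPn [j nj_neq0]] := boolP [forall j, n j == 0%N].
  exists (u + v1), v2; split=> //; last by rewrite addrA.
  apply: wspaceD v1_lam; apply: eq_wspace u_b => k; apply: eq_pairing => j.
  by rewrite eq_b (eqP (n0 j)) subr0.
exists v1, (u + v2); split=> //; last by rewrite addrCA.
by apply: wsum_cons v2_below; first exists n; first exists j.
Qed.

Hypothesis B_posdef : forall x : I -> rat, (exists i, x i != 0) ->
  0 < \sum_i \sum_j x i * (B i j)%:~R * x j.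

Lemma strictly_below_pairing b :
  strictly_below b -> exists k, pairing B k b != pairing B k lam.
Proof.
move=> [n [j nj_neq0] eq_b]; apply/existsP; apply: contraT.
rewrite negb_exists => /forallP eq_pair; case/eqP: nj_neq0.
apply: (pairing_natr_eq0 B_posdef (C := C)) => k.
have -> : pairing B k (fun l => (n l)%:R) = pairing B k lam - pairing B k b.
  by rewrite -pairingB; apply: eq_pairing => l; rewrite eq_b subKr.
by apply/eqP; rewrite subr_eq0 eq_sym; apply/negPn/eq_pair.
Qed.

Hypothesis xi_comm : forall i j p q v, xi i p (xi j q v) = xi j q (xi i p v).
Hypothesis xi_xm : forall i j p n v,
  comm (xi i (p + 1)) (xm j n) v - comm (xi i p) (xm j n.+1) v
  = - (dij C B i j *: acomm (xi i p) (xm j n) v).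
Hypothesis xp_xm : forall i j a b v,
  comm (xp i a) (xm j b) v = if i == j then xi i (a + b)%N%:Z v else 0.

Lemma singular_wspace_top u0 v :
  weight_module B m xi -> u0 != 0 -> wsp lam u0 ->
  (forall W, submodule xp xm xi W -> (exists2 w, w != 0 & W w) ->
     forall u, wsp lam u -> W u) ->
  singular xp v -> wsp lam v.
Proof.
move=> wmod u0_neq0 u0_lam co_highest.
have [v1 [v2 [v1_lam v2_below ->]] v_sing] := wsum_top_split (weight_module_wsum wmod v).
have v2_sing : singular xp v2.
  by move=> i n; have := v_sing i n; rewrite linearD /= (xp_top_eq0 _ _ v1_lam) add0r.
have [->|v2_neq0] := eqVneq v2 0; first by rewrite addr0.
have v2_span : exists2 w, w != 0 & lower_span xm xi v2 w.
  by exists v2 => //; apply: lower_span_base.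
have v2_submod := lower_span_submodule xi_xp xi_normalized xp_xm v2_sing.
have u0_span := co_highest _ v2_submod v2_span _ u0_lam.
have u0_below := lower_span_wsum xi_xm xi_normalized xi_comm
  strictly_below_sub_delta v2_below u0_span.
case/eqP: u0_neq0; apply: (wsum_wspace_eq0 xi_comm _ u0_below u0_lam).
exact: strictly_below_pairing.
Qed.

Definition xp_word (X : seq (I * nat)) v := foldr (fun p u => xp p.1 p.2 u) v X.

Lemma xp_word_wspace X b u : wsp b u ->
  wsp (fun j => b j + (count (fun p : I * nat => p.1 == j) X)%:R) (xp_word X u).
Proof.
elim: X => [|[i n] X IH] u_b /=.
  by apply: eq_wspace u_b => k; apply: eq_pairing => j; rewrite addr0.
apply: eq_wspace (wspace_xp xi_xp xi_normalized i n (IH u_b)) => k.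
by apply: eq_pairing => j; rewrite natrD eq_sym; ring.
Qed.

Lemma xp_word_size X b n x : (forall j, b j = lam j - (n j)%:R) -> wsp b x ->
  xp_word X x != 0 -> (size X <= \sum_j n j)%N.
Proof.
move=> eq_b x_b Xx_neq0; have Xx_w := xp_word_wspace X x_b.
have [n' eq_n'] := weights_below (ex_intro2 _ _ (xp_word X x) Xx_neq0 Xx_w).
rewrite -(sum_count_eq fst X); apply: leq_sum => j _.
set c := count (fun p : I * nat => p.1 == j) X.
suff <- : (n' j + c)%N = n j by rewrite leq_addl.
apply/eqP; rewrite -(eqr_nat C) natrD; apply/eqP.
have -> : (n' j)%:R + c%:R = (b j + c%:R) - (lam j - (n' j)%:R)
    - (b j - (lam j - (n j)%:R)) + (n j)%:R :> C by ring.
by rewrite -eq_n' -eq_b !subrr add0r.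
Qed.

Lemma xp_wordD X u v : xp_word X (u + v) = xp_word X u + xp_word X v.
Proof. by elim: X => //= p X ->; rewrite linearD. Qed.

Lemma xp_word0 X : xp_word X 0 = 0.
Proof. by elim: X => //= p X ->; rewrite linear0. Qed.

Lemma xp_word_eventually_eq0 w : weight_module B m xi ->
  exists N, forall X, (N < size X)%N -> xp_word X w = 0.
Proof.
move=> /weight_module_wsum/(_ w); elim=> [|b x w' _ x_b _ [N1 HN1]].
  by exists 0%N => X _; rewrite xp_word0.
have [->|x_neq0] := eqVneq x 0; first by exists N1 => X /HN1; rewrite add0r.
have [n eq_b] := weights_below (ex_intro2 _ _ x x_neq0 x_b).
exists (maxn N1 (\sum_j n j)) => X; rewrite gtn_max => /andP[/HN1 Xw'0 n_lt].
rewrite xp_wordD Xw'0 addr0; apply/eqP; apply: contraLR n_lt => Xx_neq0.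
by rewrite -leqNgt (xp_word_size eq_b x_b).
Qed.

Lemma exists_singular_xp_word w : weight_module B m xi -> w != 0 ->
  exists2 X, xp_word X w != 0 & singular xp (xp_word X w).
Proof.
move=> wmod w_neq0; have [N HN] := xp_word_eventually_eq0 w wmod.
suff raise k X : (N < size X + k)%N -> xp_word X w != 0 ->
    exists2 Y, xp_word Y w != 0 & singular xp (xp_word Y w).
  exact: (raise N.+1 [::]).
elim: k X => [|k IHk] X; first by rewrite addn0 => /HN->; rewrite eqxx.
move=> N_lt Xw_neq0.
have [[i [n Xw_raised]]|] := classic (exists i n, xp i n (xp_word X w) != 0).
  by apply: (IHk ((i, n) :: X)) => //; rewrite addSnnS.
move=> no_raise; exists X => // i n; apply/eqP; apply: contraT => Xw_raised.
by case: no_raise; exists i, n.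
Qed.

Lemma top_in_submodule u0 W : weight_module B m xi ->
  (forall v, wsp lam v -> exists c, v = c *: u0) ->
  (forall v, singular xp v -> wsp lam v) ->
  submodule xp xm xi W -> (exists2 w, w != 0 & W w) -> forall v, wsp lam v -> W v.
Proof.
move=> wmod top_line sing_top [_ _ WZ W_stable] [w w_neq0 Ww] v v_lam.
have [X Xw_neq0 Xw_sing] := exists_singular_xp_word wmod w_neq0.
have WXw : W (xp_word X w).
  by elim: X {Xw_neq0 Xw_sing} => //= p X WXw; exact: ((W_stable _ WXw).1 p.1 p.2).1.
have [c Xw_eq] := top_line _ (sing_top _ Xw_sing).
have c_neq0 : c != 0 by apply: contraNneq Xw_neq0 => c0; rewrite Xw_eq c0 scale0r.
have Wu0 : W u0 by rewrite -[u0]scale1r -(mulVf c_neq0) -scalerA -Xw_eq; apply: WZ.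
by have [c' ->] := top_line _ v_lam; apply: WZ.
Qed.

End TopWeight.

Lemma top_graded_at_unique (C : numFieldType) (V : lmodType C) (I : finType)
    (B : I -> I -> int) (m : I -> int) (xi : I -> int -> {linear V -> V})
    (lam lam' : I -> C) :
  top_graded_at B m xi lam -> top_graded_at B m xi lam' -> forall j, lam' j = lam j.
Proof.
move=> [_ below [u [u_neq0 u_lam] _]] [_ below' [u' [u'_neq0 u'_lam'] _]] j.
have [n /(_ j) eq_n] := below' _ (ex_intro2 _ _ u u_neq0 u_lam).
have [n' /(_ j) eq_n'] := below _ (ex_intro2 _ _ u' u'_neq0 u'_lam').
have : (n j + n' j)%:R == 0 :> C.
  have -> : (n j + n' j)%:R = - ((lam' j - (n j)%:R - lam j)
      + (lam j - (n' j)%:R - lam' j)) :> C by rewrite natrD; ring.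
  by rewrite -eq_n -eq_n' !subrr addr0 oppr0.
by rewrite pnatr_eq0 addn_eq0 => /andP[/eqP nj0 _]; rewrite eq_n nj0 subr0.
Qed.

Theorem lemma4p6 (R : realType) (I : finType) (d : I -> nat)
    (B : I -> I -> int) (m : I -> int) (V : lmodType R[i])
    (xp xm : I -> nat -> {linear V -> V}) (xi : I -> int -> {linear V -> V})
    (lam : I -> R[i]) :
  simple_cartan_datum d B ->
  Ymu_module d B m xp xm xi ->
  top_graded_at B m xi lam ->
  (co_highest_lweight B m xp xm xi <->
   forall v : V, wspace B m xi lam v <-> (forall (i : I) (n : nat), xp i n v = 0)).
Proof.
move=> [_ [_ _ B_posdef _]] [[xi_comm xp_xm] [[xi_xp xi_xm] [_ _ _ xi_norm]]] top.
have [wmod below [u0 [u0_neq0 u0_lam] top_line]] := top.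
split=> [[lam' [top' co_highest]] v | sing_top].
  have [_ below' [u1 [u1_neq0 u1_lam'] _]] := top'.
  have eq_lam k : pairing B k lam' = pairing B k lam.
    exact/eq_pairing/(top_graded_at_unique top top').
  split=> [v_lam i n | v_sing]; first exact: (xp_top_eq0 xi_xp xi_norm below).
  apply: (eq_wspace eq_lam); apply: (singular_wspace_top xi_xp xi_norm below'
    B_posdef xi_comm xi_xm xp_xm wmod u1_neq0 u1_lam' co_highest v_sing).
exists lam; split=> // W; apply: (top_in_submodule xi_xp xi_norm below wmod top_line).
by move=> v; apply: (sing_top v).2.
Qed.
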